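(* Let $J$ be a cone with joins. Then: (a) $(x+y)\wedge z\le x\wedge z+y\wedge z$ for all $x,y,z\in J$; (b) if $x+y=z+w$ then $x+y=x\vee z+y\wedge w$; in particular $x+y=x\vee y+x\wedge y$ for all $x,y\in J$; (c) for every family $(x_i)\subset J$ and $y\in J$: $\sup_i(x_i\wedge y)\le(\sup_ix_i)\wedge y\le\sup_i(x_i\wedge y)+\varepsilon(y\vee\sup_ix_i)$; (d) if $v_1+v_2=w_1+w_2$ then there are $z_{ij}\in J$, $i,j=1,2$, with $z_{11}+z_{12}=v_1$, $z_{21}+z_{22}=v_2+\varepsilon v_1$, $z_{11}+z_{21}=w_1$, $z_{12}+z_{22}=w_2+\varepsilon w_1$; (e) if $v_1+v_2=w_1+w_2$ then there are $z_{ij}\in J$, $i,j=1,2$, with $z_{11}+z_{12}=v_1$, $z_{21}+z_{22}=v_2$, $z_{11}+z_{21}+\varepsilon w_2\ge w_1$, $z_{12}+z_{22}+\varepsilon w_1\ge w_2$.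
   Context: A prewedge is a set $W$ with a commutative associative addition with neutral element $0$ and a multiplication $[0,\infty)\times W\to W$ such that $\lambda(\eta v)=(\lambda\eta)v$, $0v=0$, $1v=v$, $(\lambda+\eta)v=\lambda v+\eta v$, $\lambda(v+w)=\lambda v+\lambda w$; it carries the preorder $v\le w$ iff $v+z=w$ for some $z$. A wedge is a prewedge in which $\le$ is antisymmetric and $v=\sup_{\eta<1}\eta v$ for every $v$. A cone is a wedge in which every directed subset (a subset in which every finite subset, including the empty one, has an upper bound in the subset) has a supremum. A cone with joins is a cone $J$ in which every subset $A$ has an infimum and $\inf(v+A)=v+\inf A$ for all $v\in J$, $A\subset J$, where $v+A=\{v+a:a\in A\}$; it is a complete lattice, and $\vee,\wedge$ denote the supremum and infimum of two elements. For $v$ in a cone, $\varepsilon v:=\inf\{\lambda v:\lambda>0\}$ (the part at infinity of $v$). *)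

From Stdlib Require Import Reals List ClassicalEpsilon.
Open Scope R_scope.

(* Operations of a prewedge: addition, zero, and scalar multiplication.
   Scalar multiplication is a total map R -> W -> W, but all axioms and all
   uses only concern scalars lambda in [0, +oo). *)
Record cone_ops (W : Type) := ConeOps {
  cadd : W -> W -> W;
  czero : W;
  csmul : R -> W -> W
}.
Arguments cadd {W} _ _ _.
Arguments czero {W} _.
Arguments csmul {W} _ _ _.

Section ConeDefs.
Context {W : Type} (o : cone_ops W).

Local Notation "x + y" := (cadd o x y).
Local Notation "l * x" := (csmul o l x).

Definition is_prewedge : Prop :=
  (forall x y, x + y = y + x) /\
  (forall x y z, x + (y + z) = (x + y) + z) /\
  (forall x, x + czero o = x) /\
  (forall l e v, 0 <= l -> 0 <= e -> l * (e * v) = (l * e)%R * v) /\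
  (forall v, 0 * v = czero o) /\
  (forall v, 1 * v = v) /\
  (forall l e v, 0 <= l -> 0 <= e -> (l + e)%R * v = l * v + e * v) /\
  (forall l v w, 0 <= l -> l * (v + w) = l * v + l * w).

Definition cle (v w : W) : Prop := exists z, v + z = w.

Definition is_ub (A : W -> Prop) (s : W) : Prop := forall a, A a -> cle a s.
Definition is_lb (A : W -> Prop) (s : W) : Prop := forall a, A a -> cle s a.
Definition is_sup (A : W -> Prop) (s : W) : Prop :=
  is_ub A s /\ forall u, is_ub A u -> cle s u.
Definition is_inf (A : W -> Prop) (s : W) : Prop :=
  is_lb A s /\ forall u, is_lb A u -> cle u s.

Definition is_wedge : Prop :=
  is_prewedge /\
  (forall v w, cle v w -> cle w v -> v = w) /\
  (forall v, is_sup (fun u => exists e, 0 <= e < 1 /\ u = e * v) v).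

(* directed: every finite subset (including the empty one) has an upper
   bound in the subset *)
Definition directed (A : W -> Prop) : Prop :=
  forall l : list W, (forall x, In x l -> A x) ->
    exists u, A u /\ forall x, In x l -> cle x u.

Definition is_cone : Prop :=
  is_wedge /\ forall A, directed A -> exists s, is_sup A s.

Definition is_cone_with_joins : Prop :=
  is_cone /\
  (forall A, exists i, is_inf A i) /\
  (forall v A i, is_inf A i ->
     is_inf (fun u => exists a, A a /\ u = v + a) (v + i)).

(* chosen infimum / supremum (unique whenever they exist, by antisymmetry) *)
Definition cinf (A : W -> Prop) : W := epsilon (inhabits (czero o)) (is_inf A).
Definition csup (A : W -> Prop) : W := epsilon (inhabits (czero o)) (is_sup A).

Definition cmeet (x y : W) : W := cinf (fun u => u = x \/ u = y).
Definition cjoin (x y : W) : W := csup (fun u => u = x \/ u = y).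

Definition csupf {I : Type} (x : I -> W) : W := csup (fun u => exists i, u = x i).

Definition ceps (v : W) : W := cinf (fun u => exists l, 0 < l /\ u = l * v).

End ConeDefs.

From Stdlib Require Import Reals Lra Lia ClassicalEpsilon.
Open Scope R_scope.

(* Parts (a) and (b) follow from the distributivity of + over infima.  The
   rest rests on approximate cancellation: u + a <= u + b implies
   a <= b + ε u, obtained by iterating to u + n a <= u + n b and scaling by
   1/n; the error is harmless because u + ε u = u.  For (c) cancellation is
   applied to y + sup x <= (y ⊔ sup x) + sup (x_i ⊓ y), a consequence of (b);
   for (d) and (e) the common pieces v1 ⊓ w1 and v2 ⊓ w2 are cancelled from
   the exchange identity w1 + v2 ⊓ w2 = v1 ⊓ w1 + v2. *)

Section ConeWithJoins.
Context {W : Type} (o : cone_ops W) (HJ : is_cone_with_joins o).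

Local Infix "+" := (cadd o).
Local Notation "l • v" := (csmul o l v) (at level 40).
Local Infix "≤" := (cle o) (at level 70, no associativity).
Local Infix "⊓" := (cmeet o) (at level 40, left associativity).
Local Infix "⊔" := (cjoin o) (at level 40, left associativity).
Local Notation ε := (ceps o).

Let prewedge : is_prewedge o := proj1 (proj1 (proj1 HJ)).

Lemma cadd_comm x y : x + y = y + x.
Proof. intros; destruct prewedge as (Hax & _); auto. Qed.

Lemma cadd_assoc x y z : x + (y + z) = x + y + z.
Proof. intros; destruct prewedge as (_ & Hax & _); auto. Qed.

Lemma cadd_0_r x : x + czero o = x.
Proof. intros; destruct prewedge as (_ & _ & Hax & _); auto. Qed.

Lemma cadd_0_l x : czero o + x = x.
Proof. now rewrite cadd_comm, cadd_0_r. Qed.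

Lemma cadd_permute x y z : x + (y + z) = y + (x + z).
Proof. now rewrite !cadd_assoc, (cadd_comm x y). Qed.

Lemma cadd_add_swap a b c d : a + b + (c + d) = a + c + (b + d).
Proof. now rewrite <- !cadd_assoc, (cadd_permute b c d). Qed.

Lemma csmul_assoc l e v : 0 <= l -> 0 <= e -> l • (e • v) = (l * e) • v.
Proof. intros; destruct prewedge as (_ & _ & _ & Hax & _); auto. Qed.

Lemma csmul_0_l v : 0 • v = czero o.
Proof. intros; destruct prewedge as (_ & _ & _ & _ & Hax & _); auto. Qed.

Lemma csmul_1_l v : 1 • v = v.
Proof. intros; destruct prewedge as (_ & _ & _ & _ & _ & Hax & _); auto. Qed.

Lemma csmul_add_distr_r l e v : 0 <= l -> 0 <= e -> (l + e)%R • v = l • v + e • v.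
Proof. intros; destruct prewedge as (_ & _ & _ & _ & _ & _ & Hax & _); auto. Qed.

Lemma csmul_add_distr_l l v w : 0 <= l -> l • (v + w) = l • v + l • w.
Proof. intros; destruct prewedge as (_ & _ & _ & _ & _ & _ & _ & Hax); auto. Qed.

Lemma cle_antisym v w : v ≤ w -> w ≤ v -> v = w.
Proof. apply HJ. Qed.

Lemma csmul_lt_1_sup v : is_sup o (fun u => exists e, 0 <= e < 1 /\ u = e • v) v.
Proof. apply HJ. Qed.

Lemma cle_refl v : v ≤ v.
Proof. exists (czero o). apply cadd_0_r. Qed.

Lemma cle_trans u v w : u ≤ v -> v ≤ w -> u ≤ w.
Proof. intros [a <-] [b <-]. exists (a + b). apply cadd_assoc. Qed.

Lemma cle_0_l v : czero o ≤ v.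
Proof. exists v. apply cadd_0_l. Qed.

Lemma cle_add_r a b : a ≤ a + b.
Proof. now exists b. Qed.

Lemma cle_add_l a b : a ≤ b + a.
Proof. exists b. apply cadd_comm. Qed.

Lemma cle_add_compat a b c d : a ≤ b -> c ≤ d -> a + c ≤ b + d.
Proof. intros [x <-] [y <-]. exists (x + y). apply cadd_add_swap. Qed.

Lemma cle_add_compat_r a b c : a ≤ b -> a + c ≤ b + c.
Proof. intro H. apply cle_add_compat; [exact H | apply cle_refl]. Qed.

Lemma cle_add_compat_l a b c : a ≤ b -> c + a ≤ c + b.
Proof. intro H. apply cle_add_compat; [apply cle_refl | exact H]. Qed.

Lemma csmul_le_compat_l l a b : 0 <= l -> a ≤ b -> l • a ≤ l • b.
Proof. intros Hl [z <-]. exists (l • z). now rewrite csmul_add_distr_l. Qed.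

Lemma csmul_le_compat_r l m v : 0 <= l <= m -> l • v ≤ m • v.
Proof.
  intro H. exists ((m - l) • v).
  rewrite <- csmul_add_distr_r by lra. f_equal. lra.
Qed.

Lemma cinf_spec A : is_inf o A (cinf o A).
Proof. unfold cinf. apply epsilon_spec, HJ. Qed.

Lemma csup_spec A : is_sup o A (csup o A).
Proof.
  unfold csup. apply epsilon_spec.
  destruct (cinf_spec (is_ub o A)) as [Hlb Hglb].
  exists (cinf o (is_ub o A)). split.
  - intros a Ha. apply Hglb. intros u Hu. now apply Hu.
  - intros u Hu. now apply Hlb.
Qed.

Lemma add_inf_glb A i v u :
  is_inf o A i -> (forall a, A a -> u ≤ v + a) -> u ≤ v + i.
Proof.
  intros Hi H. apply (proj2 (proj2 (proj2 HJ) v A i Hi)).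
  intros _ [a [Ha ->]]. auto.
Qed.

Lemma cmeet_le_l x y : x ⊓ y ≤ x.
Proof. apply cinf_spec. auto. Qed.

Lemma cmeet_le_r x y : x ⊓ y ≤ y.
Proof. apply cinf_spec. auto. Qed.

Lemma cmeet_glb x y u : u ≤ x -> u ≤ y -> u ≤ x ⊓ y.
Proof. intros. apply cinf_spec. now intros a [-> | ->]. Qed.

Lemma cjoin_ge_l x y : x ≤ x ⊔ y.
Proof. apply csup_spec. auto. Qed.

Lemma cjoin_ge_r x y : y ≤ x ⊔ y.
Proof. apply csup_spec. auto. Qed.

Lemma cjoin_lub x y u : x ≤ u -> y ≤ u -> x ⊔ y ≤ u.
Proof. intros. apply csup_spec. now intros a [-> | ->]. Qed.

Lemma cmeet_comm x y : x ⊓ y = y ⊓ x.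
Proof. apply cle_antisym; apply cmeet_glb; (apply cmeet_le_l || apply cmeet_le_r). Qed.

Lemma cjoin_comm x y : x ⊔ y = y ⊔ x.
Proof. apply cle_antisym; apply cjoin_lub; (apply cjoin_ge_l || apply cjoin_ge_r). Qed.

Lemma csupf_ub {I} (x : I -> W) i : x i ≤ csupf o x.
Proof. apply csup_spec. eauto. Qed.

Lemma csupf_lub {I} (x : I -> W) u : (forall i, x i ≤ u) -> csupf o x ≤ u.
Proof. intro H. apply csup_spec. now intros a [i ->]. Qed.

(** * The part at infinity *)

Lemma ceps_le_smul l v : 0 < l -> ε v ≤ l • v.
Proof. intro Hl. apply cinf_spec. eauto. Qed.

Lemma add_ceps_glb u v w :
  (forall l, 0 < l -> u ≤ w + l • v) -> u ≤ w + ε v.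
Proof.
  intro H. apply (add_inf_glb (fun a => exists l, 0 < l /\ a = l • v)).
  - apply cinf_spec.
  - intros a [l [Hl ->]]. auto.
Qed.

Lemma ceps_glb u v : (forall l, 0 < l -> u ≤ l • v) -> u ≤ ε v.
Proof.
  intro H. rewrite <- cadd_0_l. apply add_ceps_glb.
  intros l Hl. rewrite cadd_0_l. auto.
Qed.

(* The wedge axiom v = sup_{e<1} e v is what makes ε v negligible next to v. *)
Lemma cadd_ceps_r v : v + ε v = v.
Proof.
  apply cle_antisym; [| apply cle_add_r].
  set (p := v + ε v).
  assert (Hp : forall m, 1 < m -> p ≤ m • v).
  { intros m Hm. replace m with (1 + (m - 1))%R by lra.
    rewrite csmul_add_distr_r, csmul_1_l by lra.
    apply cle_add_compat_l, ceps_le_smul. lra. }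
  apply (csmul_lt_1_sup p). intros a [e [He ->]].
  destruct (Req_dec e 0) as [-> | Hne].
  - rewrite csmul_0_l. apply cle_0_l.
  - apply (cle_trans _ (e • (/ e • v))).
    + apply csmul_le_compat_l; [lra |]. apply Hp.
      rewrite <- Rinv_1. apply Rinv_lt_contravar; lra.
    + rewrite csmul_assoc, Rinv_r, csmul_1_l by
        (try lra; left; apply Rinv_0_lt_compat; lra).
      apply cle_refl.
Qed.

Lemma ceps_idem v : ε v + ε v = ε v.
Proof.
  apply cle_antisym; [| apply cle_add_r].
  apply ceps_glb. intros l Hl. replace l with (l / 2 + l / 2)%R by lra.
  rewrite csmul_add_distr_r by lra.
  apply cle_add_compat; apply ceps_le_smul; lra.
Qed.

Lemma ceps_le_compat a b : a ≤ b -> ε a ≤ ε b.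
Proof.
  intro H. apply ceps_glb. intros l Hl.
  apply (cle_trans _ (l • a)); [apply ceps_le_smul, Hl |].
  apply csmul_le_compat_l; [lra | exact H].
Qed.

Lemma ceps_add_le a b : ε (a + b) ≤ ε a + ε b.
Proof.
  apply add_ceps_glb. intros l Hl.
  rewrite (cadd_comm (ε a)). apply add_ceps_glb. intros m Hm.
  rewrite (cadd_comm (l • b)).
  set (k := Rmin l m).
  assert (Hk : 0 < k) by (apply Rmin_glb_lt; lra).
  assert (Hkl : k <= l) by apply Rmin_l.
  assert (Hkm : k <= m) by apply Rmin_r.
  apply (cle_trans _ (k • (a + b))); [now apply ceps_le_smul |].
  rewrite csmul_add_distr_l by lra.
  apply cle_add_compat; apply csmul_le_compat_r; lra.
Qed.

Lemma cadd_absorb a e : e + e = e -> a ≤ e -> a + e = e.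
Proof.
  intros He Ha. apply cle_antisym; [| apply cle_add_l].
  rewrite <- He at 2. now apply cle_add_compat_r.
Qed.

Lemma cadd_ceps_absorb v a b : ε a ≤ ε b + ε v -> v + (ε b + ε a) = v + ε b.
Proof.
  intro H. apply cle_antisym; [| apply cle_add_compat_l, cle_add_r].
  apply (cle_trans _ (v + (ε b + (ε b + ε v)))).
  - now apply cle_add_compat_l, cle_add_compat_l.
  - rewrite (cadd_assoc (ε b)), ceps_idem, (cadd_comm (ε b)), cadd_assoc, cadd_ceps_r.
    apply cle_refl.
Qed.

(** * Approximate cancellation *)

Lemma cle_add_smul_nat u a b :
  u + a ≤ u + b -> forall n, u + INR n • a ≤ u + INR n • b.
Proof.
  intros H n. induction n as [| n IH].
  - change (INR 0) with 0. rewrite !csmul_0_l. apply cle_refl.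
  - pose proof (pos_INR n).
    rewrite S_INR, !csmul_add_distr_r, !csmul_1_l by lra.
    rewrite !cadd_assoc. apply (cle_trans _ (u + INR n • b + a)).
    + now apply cle_add_compat_r.
    + rewrite <- !cadd_assoc, (cadd_comm (INR n • b) a), (cadd_comm (INR n • b) b),
        !cadd_assoc.
      now apply cle_add_compat_r.
Qed.

Lemma cle_add_cancel_l u a b : u + a ≤ u + b -> a ≤ b + ε u.
Proof.
  intro H. apply add_ceps_glb. intros l Hl.
  destruct (archimed_cor1 l Hl) as [N [HN HN0]].
  assert (HNpos : 0 < INR N) by (apply lt_0_INR; lia).
  assert (Hinv : 0 < / INR N) by (apply Rinv_0_lt_compat; lra).
  pose proof (csmul_le_compat_l (/ INR N) _ _ ltac:(lra) (cle_add_smul_nat u a b H N))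
    as HN_scaled.
  rewrite !csmul_add_distr_l, !csmul_assoc, Rinv_l, !csmul_1_l in HN_scaled
    by (try lra; apply pos_INR).
  apply (cle_trans _ (/ INR N • u + a)); [apply cle_add_l |].
  apply (cle_trans _ _ _ HN_scaled). rewrite cadd_comm.
  apply cle_add_compat_l, csmul_le_compat_r. lra.
Qed.

Lemma cadd_cancel_l u a b : u + a = u + b -> a + ε u = b + ε u.
Proof.
  assert (Hone : forall a b, u + a = u + b -> a + ε u ≤ b + ε u).
  { intros a' b' E. apply (cle_trans _ (b' + ε u + ε u)).
    - apply cle_add_compat_r, cle_add_cancel_l. rewrite E. apply cle_refl.
    - rewrite <- cadd_assoc, ceps_idem. apply cle_refl. }
  intro E. apply cle_antisym; apply Hone; auto.
Qed.

Lemma add_sup_le A s u U :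
  u ≤ U -> is_sup o A s -> (forall a, A a -> u + a ≤ U) -> u + s ≤ U.
Proof.
  intros [d Hd] [_ Hs] H.
  assert (Hsd : s ≤ d + ε u).
  { apply Hs. intros a Ha. apply cle_add_cancel_l. rewrite Hd. auto. }
  apply (cle_trans _ (u + (d + ε u))); [now apply cle_add_compat_l |].
  rewrite cadd_assoc, Hd. apply (cle_trans _ (U + ε U)).
  - apply cle_add_compat_l, ceps_le_compat. now exists d.
  - rewrite cadd_ceps_r. apply cle_refl.
Qed.

Lemma cadd_meet_exchange_l v1 v2 w1 w2 :
  v1 + v2 = w1 + w2 -> w1 + v2 ⊓ w2 = v1 ⊓ w1 + v2.
Proof.
  intro E. apply cle_antisym.
  - rewrite (cadd_comm _ v2). apply (add_inf_glb (fun u => u = v1 \/ u = w1)).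
    + apply cinf_spec.
    + intros a [-> | ->]; rewrite (cadd_comm v2).
      * rewrite E. apply cle_add_compat_l, cmeet_le_r.
      * apply cle_add_compat_l, cmeet_le_l.
  - apply (add_inf_glb (fun u => u = v2 \/ u = w2)).
    + apply cinf_spec.
    + intros a [-> | ->].
      * apply cle_add_compat_r, cmeet_le_r.
      * rewrite <- E. apply cle_add_compat_r, cmeet_le_l.
Qed.

Lemma cadd_meet_exchange_r v1 v2 w1 w2 :
  v1 + v2 = w1 + w2 -> v1 + v2 ⊓ w2 = v1 ⊓ w1 + w2.
Proof.
  intro E. rewrite (cadd_comm v1), (cadd_comm _ w2).
  symmetry. apply cadd_meet_exchange_l. now rewrite cadd_comm, E, cadd_comm.
Qed.

Lemma cmeet_add_le x y z : (x + y) ⊓ z ≤ x ⊓ z + y ⊓ z.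
Proof.
  apply (add_inf_glb (fun u => u = y \/ u = z)); [apply cinf_spec |].
  intros a Ha. rewrite (cadd_comm (x ⊓ z)).
  apply (add_inf_glb (fun u => u = x \/ u = z)); [apply cinf_spec |].
  intros b Hb. destruct Ha as [-> | ->], Hb as [-> | ->].
  - rewrite (cadd_comm y). apply cmeet_le_l.
  - apply (cle_trans _ z); [apply cmeet_le_r | apply cle_add_l].
  - apply (cle_trans _ z); [apply cmeet_le_r | apply cle_add_r].
  - apply (cle_trans _ z); [apply cmeet_le_r | apply cle_add_r].
Qed.

Lemma cadd_join_meet x y z w : x + y = z + w -> x + y = x ⊔ z + y ⊓ w.
Proof.
  intro E. apply cle_antisym.
  - apply (add_inf_glb (fun u => u = y \/ u = w)); [apply cinf_spec |].
    intros a [-> | ->].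
    + apply cle_add_compat_r, cjoin_ge_l.
    + rewrite E. apply cle_add_compat_r, cjoin_ge_r.
  - rewrite cadd_comm. apply (add_sup_le (fun u => u = x \/ u = z)).
    + apply (cle_trans _ y); [apply cmeet_le_l | apply cle_add_l].
    + apply csup_spec.
    + intros a [-> | ->].
      * rewrite (cadd_comm x). apply cle_add_compat_r, cmeet_le_l.
      * rewrite E, (cadd_comm z). apply cle_add_compat_r, cmeet_le_r.
Qed.

Lemma cadd_eq_join_meet x y : x + y = x ⊔ y + x ⊓ y.
Proof. rewrite cmeet_comm. apply cadd_join_meet, cadd_comm. Qed.

Lemma csupf_meet_le {I} (x : I -> W) y :
  csupf o (fun i => x i ⊓ y) ≤ csupf o x ⊓ y.
Proof.
  apply csupf_lub. intro i. apply cmeet_glb; [| apply cmeet_le_r].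
  apply (cle_trans _ (x i)); [apply cmeet_le_l | apply csupf_ub].
Qed.

Lemma meet_csupf_le {I} (x : I -> W) y :
  csupf o x ⊓ y ≤ csupf o (fun i => x i ⊓ y) + ε (y ⊔ csupf o x).
Proof.
  set (X := csupf o x). set (S := csupf o (fun i => x i ⊓ y)).
  assert (H : y + X ≤ X ⊔ y + S).
  { apply (add_sup_le (fun u => exists i, u = x i)).
    - apply (cle_trans _ (X ⊔ y)); [apply cjoin_ge_r | apply cle_add_r].
    - apply csup_spec.
    - intros a [i ->]. rewrite cadd_comm, cadd_eq_join_meet.
      apply cle_add_compat.
      + apply cjoin_lub; [| apply cjoin_ge_r].
        apply (cle_trans _ X); [apply csupf_ub | apply cjoin_ge_l].
      + apply (csupf_ub (fun i => x i ⊓ y)). }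
  rewrite cadd_comm, cadd_eq_join_meet in H.
  rewrite cjoin_comm. now apply cle_add_cancel_l.
Qed.

(** * Riesz-type decompositions *)

Lemma riesz_decomposition_ceps v1 v2 w1 w2 :
  v1 + v2 = w1 + w2 ->
  exists z11 z12 z21 z22,
    z11 + z12 = v1 /\ z21 + z22 = v2 + ε v1 /\
    z11 + z21 = w1 /\ z12 + z22 = w2 + ε w1.
Proof.
  intro E.
  set (z11 := v1 ⊓ w1). set (M := v2 ⊓ w2). set (e := ε v1 + ε w1).
  destruct (cmeet_le_l v1 w1) as [z12 H12]. destruct (cmeet_le_r v1 w1) as [z21 H21].
  fold z11 in H12, H21.
  assert (He : e + e = e) by (unfold e; now rewrite cadd_add_swap, !ceps_idem).
  assert (Hz11 : ε z11 ≤ e).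
  { apply (cle_trans _ (ε v1)); [apply ceps_le_compat, cmeet_le_l | apply cle_add_r]. }
  assert (Hcancel : forall a b, z11 + a = z11 + b -> a + e = b + e).
  { intros a b Hab. rewrite <- (cadd_absorb _ _ He Hz11), !cadd_assoc.
    now rewrite (cadd_cancel_l _ _ _ Hab). }
  exists z11, z12, z21, (M + e).
  split; [exact H12 |]. split; [| split; [exact H21 |]].
  - rewrite cadd_assoc, (Hcancel _ v2).
    + unfold e. apply cadd_ceps_absorb.
      apply (cle_trans _ (ε (v1 + v2))); [| apply ceps_add_le].
      apply ceps_le_compat. rewrite E. apply cle_add_r.
    + rewrite cadd_assoc, H21. apply cadd_meet_exchange_l, E.
  - rewrite cadd_assoc, (Hcancel _ w2).
    + unfold e. rewrite (cadd_comm (ε v1)). apply cadd_ceps_absorb.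
      apply (cle_trans _ (ε (w1 + w2))); [| apply ceps_add_le].
      apply ceps_le_compat. rewrite <- E. apply cle_add_r.
    + rewrite cadd_assoc, H12. now apply cadd_meet_exchange_r.
Qed.

Lemma riesz_decomposition_le v1 v2 w1 w2 :
  v1 + v2 = w1 + w2 ->
  exists z11 z12 z21 z22,
    z11 + z12 = v1 /\ z21 + z22 = v2 /\
    w1 ≤ z11 + z21 + ε w2 /\ w2 ≤ z12 + z22 + ε w1.
Proof.
  intro E.
  pose proof (cadd_meet_exchange_l _ _ _ _ E) as Xl.
  pose proof (cadd_meet_exchange_r _ _ _ _ E) as Xr.
  set (z11 := v1 ⊓ w1) in *. set (M := v2 ⊓ w2) in *.
  destruct (cmeet_le_l v1 w1) as [z12 H12]. destruct (cmeet_le_l v2 w2) as [z21 H21].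
  fold z11 in H12. fold M in H21.
  exists z11, z12, z21, M.
  split; [exact H12 |]. split; [now rewrite cadd_comm |]. split.
  - apply (cle_trans _ (z11 + z21 + ε M)).
    + apply cle_add_cancel_l.
      rewrite (cadd_permute M z11 z21), H21, (cadd_comm M w1), Xl.
      apply cle_refl.
    + apply cle_add_compat_l, ceps_le_compat, cmeet_le_r.
  - apply (cle_trans _ (z12 + M + ε z11)).
    + apply cle_add_cancel_l.
      rewrite cadd_assoc, H12, Xr.
      apply cle_refl.
    + apply cle_add_compat_l, ceps_le_compat, cmeet_le_r.
Qed.

End ConeWithJoins.

Theorem mainTheorem10 (W : Type) (o : cone_ops W) (HJ : is_cone_with_joins o) :
  (* (a) *)
  (forall x y z : W,
     cle o (cmeet o (cadd o x y) z) (cadd o (cmeet o x z) (cmeet o y z))) /\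
  (* (b) *)
  (forall x y z w : W, cadd o x y = cadd o z w ->
     cadd o x y = cadd o (cjoin o x z) (cmeet o y w)) /\
  (forall x y : W, cadd o x y = cadd o (cjoin o x y) (cmeet o x y)) /\
  (* (c) *)
  (forall (I : Type) (x : I -> W) (y : W),
     cle o (csupf o (fun i => cmeet o (x i) y)) (cmeet o (csupf o x) y) /\
     cle o (cmeet o (csupf o x) y)
           (cadd o (csupf o (fun i => cmeet o (x i) y))
                   (ceps o (cjoin o y (csupf o x))))) /\
  (* (d) *)
  (forall v1 v2 w1 w2 : W, cadd o v1 v2 = cadd o w1 w2 ->
     exists z11 z12 z21 z22 : W,
       cadd o z11 z12 = v1 /\
       cadd o z21 z22 = cadd o v2 (ceps o v1) /\
       cadd o z11 z21 = w1 /\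
       cadd o z12 z22 = cadd o w2 (ceps o w1)) /\
  (* (e) *)
  (forall v1 v2 w1 w2 : W, cadd o v1 v2 = cadd o w1 w2 ->
     exists z11 z12 z21 z22 : W,
       cadd o z11 z12 = v1 /\
       cadd o z21 z22 = v2 /\
       cle o w1 (cadd o (cadd o z11 z21) (ceps o w2)) /\
       cle o w2 (cadd o (cadd o z12 z22) (ceps o w1))).
Proof.
  repeat split.
  - apply cmeet_add_le, HJ.
  - now apply cadd_join_meet.
  - apply cadd_eq_join_meet, HJ.
  - apply csupf_meet_le, HJ.
  - apply meet_csupf_le, HJ.
  - now apply riesz_decomposition_ceps.
  - now apply riesz_decomposition_le.
Qed.
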